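(* Let $\Gamma=([n],w)$ be a hypergraph with non-negative weights, $\rho\colon\mathrm{U}(n)\to\mathrm{U}(V)$ a finite-dimensional unitary representation, and $V'=\mathrm{TorInv}(\rho)^\perp$, which is invariant under ${\cal L}(\Gamma,\rho)$. Then every eigenvalue of the restriction of ${\cal L}(\Gamma,\rho)$ to $V'$ is at least $\phi(\Gamma)=\min_{i\in[n]}\sum_{B\ni i}w_B$.
   Context: A weighted hypergraph $\Gamma=([n],w)$ assigns $w_B\ge0$ to every $B\subseteq[n]$. $\mathrm{U}_B\le\mathrm{U}(n)$ is the subgroup of unitaries coinciding with the identity outside the minor indexed by $B$, with Haar probability measure $\mu_B$; ${\cal L}(\Gamma,\rho)=\sum_Bw_B[I-\int_{\mathrm{U}_B}\rho(A)d\mu_B(A)]$. $T_n$ is the diagonal subgroup of $\mathrm{U}(n)$ and $\mathrm{TorInv}(\rho)$ the subspace of vectors fixed by $\rho(T_n)$. *)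

From HB Require Import structures.
From mathcomp Require Import all_boot all_order all_algebra.
From mathcomp Require Import complex reals.
Set Implicit Arguments. Unset Strict Implicit. Unset Printing Implicit Defensive.
Import Order.TTheory GRing.Theory Num.Theory.
Local Open Scope ring_scope.
Local Open Scope complex_scope.

Section HypergraphLaplacian.
Variable R : realType.
Local Notation C := R[i].

Definition adj m k (A : 'M[C]_(m, k)) : 'M[C]_(k, m) := (map_mx Num.conj A)^T.

Definition unitary n (A : 'M[C]_n) : Prop := A *m adj A = 1%:M.

Definition UB n (B : {set 'I_n}) (A : 'M[C]_n) : Prop :=
  unitary A /\ (forall i j : 'I_n, (i \notin B) || (j \notin B) -> A i j = (i == j)%:R).

Definition torus n (A : 'M[C]_n) : Prop := unitary A /\ is_diag_mx A.

Definition cont_on n (G : 'M[C]_n -> Prop) (f : 'M[C]_n -> C) : Prop :=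
  forall A, G A -> forall e : C, 0 < e -> exists2 d : C, 0 < d &
    forall A', G A' -> (forall i j, `|A' i j - A i j| < d) -> `|f A' - f A| < e.

(* I is the Haar (probability) integral on the compact group G, viewed as a
   functional on continuous functions: linear, local to G, positive,
   normalized, left-invariant.  By the Riesz and Haar uniqueness theorems this
   is exactly integration against the Haar probability measure. *)
Definition haar_integral n (G : 'M[C]_n -> Prop) (I : ('M[C]_n -> C) -> C) : Prop :=
  [/\ (forall f g, cont_on G f -> cont_on G g -> forall a b : C,
          I (fun A => a * f A + b * g A) = a * I f + b * I g),
      (forall f g, (forall A, G A -> f A = g A) -> I f = I g),
      (forall f, cont_on G f -> (forall A, G A -> 0 <= f A) -> 0 <= I f),
      I (fun _ => 1) = 1 &
      (forall f g0, cont_on G f -> G g0 -> I (fun A => f (g0 *m A)) = I f)].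

Definition unitary_rep n m (rho : 'M[C]_n -> 'M[C]_m) : Prop :=
  [/\ (forall A B, unitary A -> unitary B -> rho (A *m B) = rho A *m rho B),
      rho 1%:M = 1%:M,
      (forall A, unitary A -> unitary (rho A)) &
      (forall i j, cont_on (@unitary n) (fun A => rho A i j))].

Definition avg_op n m (rho : 'M[C]_n -> 'M[C]_m) (I : ('M[C]_n -> C) -> C)
  : 'M[C]_m := \matrix_(i, j) I (fun A => rho A i j).

Definition laplacian n m (w : {set 'I_n} -> R) (rho : 'M[C]_n -> 'M[C]_m)
  (I : {set 'I_n} -> ('M[C]_n -> C) -> C) : 'M[C]_m :=
  \sum_(B : {set 'I_n}) (w B)%:C *: (1%:M - avg_op rho (I B)).

Definition TorInv n m (rho : 'M[C]_n -> 'M[C]_m) (v : 'cV[C]_m) : Prop :=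
  forall t, torus t -> rho t *m v = v.
Definition TorInvPerp n m (rho : 'M[C]_n -> 'M[C]_m) (v : 'cV[C]_m) : Prop :=
  forall u, TorInv rho u -> adj u *m v = 0.

(* phi(Gamma) = min_i sum_{B \ni i} w_B  (the default value, the total weight,
   is an upper bound of every term, so this is the true minimum for n >= 1) *)
Definition phi n (w : {set 'I_n} -> R) : R :=
  \big[Num.min/ \sum_(B : {set 'I_n}) w B]_(i < n) \sum_(B : {set 'I_n} | i \in B) w B.

End HypergraphLaplacian.

From HB Require Import structures.
From mathcomp Require Import all_boot all_order all_algebra.
From mathcomp Require Import complex reals.
Set Implicit Arguments. Unset Strict Implicit. Unset Printing Implicit Defensive.
Import Order.TTheory GRing.Theory Num.Theory.
Local Open Scope ring_scope.
Local Open Scope complex_scope.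

(* P_B := \int_{U_B} rho is the orthogonal projection onto the U_B-fixed
   vectors (by left invariance of the Haar integral), so L = sum_B w_B (1 - P_B).
   The projections Q_i := P_{i} commute because the coordinate circles U_{i}
   do, satisfy Q_i P_B = P_B for i in B, and a vector fixed by every Q_i is
   torus invariant since the circles generate T_n.  Split 1 into the joint
   spectral projections E_f := prod_i (if f i then 1 - Q_i else Q_i) of the
   commuting family.  As P_B <= prod_{i in B} Q_i, we get
   <v, (1 - P_B) v> >= sum_{f meets B} <v, E_f v>, whence
   <v, L v> >= sum_f (sum_{B meets f} w_B) <v, E_f v> >= phi sum_{f <> 0} <v, E_f v>,
   and the last sum is <v, v> because E_0 v is torus invariant, hence
   orthogonal to v. *)

Section CommutingIdempotents.
Variables (A : nzRingType) (n : nat) (Q : 'I_n -> A).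
Hypotheses (Q_idem : forall i, Q i * Q i = Q i)
  (Q_comm : forall i j, GRing.comm (Q i) (Q j)).

Definition factor i (b : bool) := if b then 1 - Q i else Q i.

Definition atom (f : {ffun 'I_n -> bool}) := \prod_(i < n) factor i (f i).

Lemma factor_comm i j b c : GRing.comm (factor i b) (factor j c).
Proof.
have Q_factor k l d : GRing.comm (Q k) (factor l d).
  by case: d; [apply: commrB; [exact: commr1 | exact: Q_comm] | exact: Q_comm].
case: b; last exact: Q_factor.
by apply/commr_sym/commrB; [exact: commr1 | exact/commr_sym/Q_factor].
Qed.

Lemma factor_mul i b c : factor i b * factor i c = if b == c then factor i b else 0.
Proof.
by case: b; case: c; rewrite /= ?mulrBl ?mulrBr ?mul1r ?mulr1 Q_idem ?subrr ?subr0.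
Qed.

Lemma atom_mul_factor f i b : atom f * factor i b = if f i == b then atom f else 0.
Proof.
rewrite /atom; case/splitPr: (mem_index_enum i) => r1 r2.
rewrite big_cat big_cons /= -!mulrA.
rewrite -(commr_prod _ (fun j _ => factor_comm i j b (f j))) (mulrA (factor i _)) factor_mul.
by case: eqP; rewrite ?mul0r ?mulr0.
Qed.

Lemma atom_mulQ f i : atom f * Q i = if f i then 0 else atom f.
Proof. by rewrite -[Q i]/(factor i false) atom_mul_factor; case: (f i). Qed.

Lemma atom_comm f i : GRing.comm (atom f) (Q i).
Proof. by apply/commr_sym/commr_prod => j _; exact: (factor_comm i j false (f j)). Qed.

Lemma sum_atom : \sum_f atom f = 1.
Proof.
rewrite /atom -(bigA_distr_bigA (fun i b => factor i b)) /=.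
by rewrite big1 // => i _; rewrite big_bool /= subrK.
Qed.

Lemma atom_mul_prodQ f (B : {set 'I_n}) :
  atom f * \prod_(i in B) Q i = if [exists i in B, f i] then 0 else atom f.
Proof.
case: existsP => [[i /andP [iB fi]] | noB].
  have iBs : i \in [seq j <- index_enum 'I_n | j \in B].
    by rewrite mem_filter iB mem_index_enum.
  rewrite -big_filter; case/splitPr: iBs => r1 r2.
  rewrite big_cat big_cons /= !mulrA (commr_prod _ (fun j _ => atom_comm f j)).
  by rewrite -(mulrA _ (atom f)) atom_mulQ fi mulr0 mul0r.
elim/big_rec: _ => [|i X iB IH]; first by rewrite mulr1.
have fi : f i = false by apply/negbTE/negP => fi; apply: noB; exists i; rewrite iB.
by rewrite mulrA atom_mulQ fi.
Qed.

Lemma sum_atom_exists (B : {set 'I_n}) :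
  \sum_(f : {ffun 'I_n -> bool} | [exists i in B, f i]) atom f = 1 - \prod_(i in B) Q i.
Proof.
transitivity (\sum_f (atom f - atom f * \prod_(i in B) Q i)).
  rewrite big_mkcond; apply: eq_bigr => f _.
  by rewrite atom_mul_prodQ; case: ifP; rewrite ?subr0 ?subrr.
by rewrite sumrB -mulr_suml sum_atom mul1r.
Qed.

End CommutingIdempotents.

Section Adjoint.
Variable R : realType.
Local Notation C := R[i].

Lemma adjK m k (A : 'M[C]_(m, k)) : adj (adj A) = A.
Proof. by apply/matrixP=> i j; rewrite !mxE conjCK. Qed.

Lemma adjM m k p (A : 'M[C]_(m, k)) (B : 'M[C]_(k, p)) :
  adj (A *m B) = adj B *m adj A.
Proof. by rewrite /adj (map_mxM Num.conj) trmx_mul. Qed.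

Lemma adjB m k (A B : 'M[C]_(m, k)) : adj (A - B) = adj A - adj B.
Proof. by apply/matrixP=> i j; rewrite !mxE rmorphB. Qed.

Lemma adj1 m : adj (1%:M : 'M[C]_m) = 1%:M.
Proof. by apply/matrixP=> i j; rewrite !mxE eq_sym rmorph_nat. Qed.

Lemma unitary_adj_mul m (A : 'M[C]_m) : unitary A -> adj A *m A = 1%:M.
Proof. exact: mulmx1C. Qed.

Definition ip m (x y : 'cV[C]_m) : C := (adj x *m y) 0 0.

Lemma ipE m (x y : 'cV[C]_m) : ip x y = \sum_k (x k 0)^* * y k 0.
Proof. by rewrite /ip mxE; apply: eq_bigr => k _; rewrite !mxE. Qed.

Lemma ip_ge0 m (x : 'cV[C]_m) : 0 <= ip x x.
Proof. by rewrite ipE sumr_ge0 // => k _; rewrite mulrC mul_conjC_ge0. Qed.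

Lemma ip_gt0 m (x : 'cV[C]_m) : x != 0 -> 0 < ip x x.
Proof.
move=> x0; rewrite lt_def ip_ge0 andbT; apply: contra x0.
have ge0 k : true -> 0 <= (x k 0)^* * x k 0 by rewrite mulrC mul_conjC_ge0.
rewrite ipE => /eqP/(psumr_eq0P ge0) sum0; apply/eqP/matrixP => k j.
by rewrite (ord1 j) mxE; apply/eqP; rewrite -mul_conjC_eq0 mulrC sum0.
Qed.

Lemma ipMr m (A : 'M[C]_m) (x y : 'cV[C]_m) : ip x (A *m y) = ip (adj A *m x) y.
Proof. by rewrite /ip adjM adjK mulmxA. Qed.

Lemma ipBr m (x y z : 'cV[C]_m) : ip x (y - z) = ip x y - ip x z.
Proof. by rewrite /ip mulmxBr !mxE. Qed.

Lemma ipZr m a (x y : 'cV[C]_m) : ip x (a *: y) = a * ip x y.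
Proof. by rewrite /ip -scalemxAr !mxE. Qed.

Lemma ip_sumr m (I : finType) (P : pred I) (x : 'cV[C]_m) (F : I -> 'cV[C]_m) :
  ip x (\sum_(i | P i) F i) = \sum_(i | P i) ip x (F i).
Proof. by rewrite /ip mulmx_sumr summxE. Qed.

Definition orthoproj m (X : 'M[C]_m) := adj X = X /\ X *m X = X.

Lemma ip_orthoproj_ge0 m (X : 'M[C]_m) v : orthoproj X -> 0 <= ip v (X *m v).
Proof. by case=> aX iX; rewrite -{1}iX -mulmxA ipMr aX ip_ge0. Qed.

Lemma orthoproj1B m (X : 'M[C]_m) : orthoproj X -> orthoproj (1%:M - X).
Proof.
case=> aX iX; split; first by rewrite adjB adj1 aX.
by rewrite mulmxBl !mulmxBr !mul1mx mulmx1 iX subrr subr0.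
Qed.

Lemma ip_orthoproj_le m (X Y : 'M[C]_m) v : orthoproj X -> orthoproj Y ->
  X *m Y = Y -> ip v (Y *m v) <= ip v (X *m v).
Proof.
move=> [aX iX] [aY iY] XY.
have YX : Y *m X = Y by rewrite -aY -aX -adjM XY.
have : orthoproj (X - Y).
  split; first by rewrite adjB aX aY.
  by rewrite mulmxBl !mulmxBr iX iY XY YX subrr subr0.
by move/(ip_orthoproj_ge0 v); rewrite mulmxBl ipBr subr_ge0.
Qed.

Lemma orthoproj_idem k (X : 'M[C]_k.+1) : orthoproj X -> X * X = X.
Proof. by rewrite -mulmxE; case. Qed.

Lemma orthoproj_prod k (I : Type) (r : seq I) (P : pred I) (F : I -> 'M[C]_k.+1) :
  (forall i, orthoproj (F i)) -> (forall i j, GRing.comm (F i) (F j)) ->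
  orthoproj (\prod_(i <- r | P i) F i).
Proof.
move=> hF cF; suff [] : orthoproj (\prod_(i <- r | P i) F i) /\
    forall j, GRing.comm (F j) (\prod_(i <- r | P i) F i) by [].
elim/big_rec: _ => [|i X _ [[aX iX] cX]].
  by split; [split; [exact: adj1 | exact: mul1mx] | move=> j; exact: commr1].
have [aF iF] := hF i; have cFX : GRing.comm (F i) X := cX i.
split; last by move=> j; apply: commrM.
rewrite -!mulmxE; split; first by rewrite adjM aX aF mulmxE cFX.
by rewrite mulmxE -mulrA (mulrA X) -cFX -mulrA -!mulmxE iX mulmxA iF.
Qed.

End Adjoint.

Section SpectralBound.
Variables (R : realType) (k n : nat).
Local Notation C := R[i].
Local Notation M := 'M[C]_k.+1.
Variables (Q : 'I_n -> M) (P : {set 'I_n} -> M) (w : {set 'I_n} -> C).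
Hypotheses (Q_proj : forall i, orthoproj (Q i))
  (Q_comm : forall i j, GRing.comm (Q i) (Q j))
  (P_proj : forall B, orthoproj (P B))
  (QP : forall i (B : {set 'I_n}), i \in B -> Q i *m P B = P B)
  (w_ge0 : forall B, 0 <= w B).

Let Q_idem i : Q i * Q i = Q i := orthoproj_idem (Q_proj i).

Lemma atom_proj f : orthoproj (atom Q f).
Proof.
apply: orthoproj_prod => [i|i j]; last exact: factor_comm.
by rewrite /factor; case: ifP => _; [apply: orthoproj1B |]; exact: Q_proj.
Qed.

Lemma prodQ_mulP (B : {set 'I_n}) : (\prod_(i in B) Q i) *m P B = P B.
Proof.
elim/big_rec: _ => [|i X iB XP]; first exact: mul1mx.
by rewrite -mulmxE -mulmxA XP QP.
Qed.

Lemma sum_ip_atom_le v (B : {set 'I_n}) :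
  \sum_(f : {ffun 'I_n -> bool} | [exists i in B, f i]) ip v (atom Q f *m v)
    <= ip v ((1%:M - P B) *m v).
Proof.
rewrite -ip_sumr -mulmx_suml (sum_atom_exists Q_idem Q_comm).
rewrite !mulmxBl !ipBr lerD2l lerN2.
apply: ip_orthoproj_le => //; last exact: prodQ_mulP.
exact: orthoproj_prod.
Qed.

Variables (v : 'cV[C]_k.+1) (ph : C).
Hypotheses (v_perp : forall u, (forall i, Q i *m u = u) -> ip u v = 0)
  (ph_le : forall i, ph <= \sum_(B : {set 'I_n} | i \in B) w B).

Lemma ip_atom_false : ip v (atom Q [ffun=> false] *m v) = 0.
Proof.
have [aE _] := atom_proj [ffun=> false].
rewrite ipMr aE v_perp // => i.
by rewrite mulmxA mulmxE -(atom_comm Q_comm) (atom_mulQ Q_idem Q_comm) ffunE.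
Qed.

Lemma spectral_bound : ph * ip v v <= \sum_B w B * ip v ((1%:M - P B) *m v).
Proof.
pose S (B : {set 'I_n}) (f : {ffun 'I_n -> bool}) := [exists i in B, f i].
pose e f := ip v (atom Q f *m v).
have ip_vv : ip v v = \sum_f e f.
  by rewrite -ip_sumr -mulmx_suml sum_atom mul1mx.
have swap : \sum_B w B * \sum_(f | S B f) e f = \sum_f e f * \sum_(B | S B f) w B.
  transitivity (\sum_B \sum_f (if S B f then w B * e f else 0)).
    by apply: eq_bigr => B _; rewrite mulr_sumr big_mkcond.
  rewrite exchange_big; apply: eq_bigr => f _; rewrite mulr_sumr [RHS]big_mkcond.
  by apply: eq_bigr => B _; case: ifP; rewrite // mulrC.
apply: le_trans _ (ler_sum _ (fun B _ => ler_wpM2l (w_ge0 B) (sum_ip_atom_le v B))).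
rewrite swap ip_vv mulr_sumr; apply: ler_sum => f _.
case: (pickP f) => [i fi | f0]; last first.
  have -> : f = [ffun=> false] by apply/ffunP => i; rewrite ffunE f0.
  by rewrite [e _]ip_atom_false mulr0 mul0r.
rewrite mulrC; apply: ler_wpM2l; first exact/ip_orthoproj_ge0/atom_proj.
apply: le_trans (ph_le i) _.
rewrite [X in _ <= X]big_mkcond [X in X <= _]big_mkcond; apply: ler_sum => B _.
case: ifP => iB; last by case: ifP.
by rewrite ifT //; apply/existsP; exists i; rewrite iB.
Qed.

End SpectralBound.

Section HaarIntegral.
Variables (R : realType) (n : nat) (G : 'M[R[i]]_n -> Prop).
Local Notation C := R[i].
Implicit Types (f g : 'M[C]_n -> C).

Lemma cont_on_sub (H : 'M[C]_n -> Prop) f :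
  (forall A, G A -> H A) -> cont_on H f -> cont_on G f.
Proof.
move=> GH hf A GA e e0; have [d d0 hd] := hf A (GH A GA) e e0.
by exists d => // A' GA'; apply: hd; exact: GH.
Qed.

Lemma cont_on_ext f g : (forall A, G A -> f A = g A) -> cont_on G f -> cont_on G g.
Proof.
move=> fg hf A GA e e0; have [d d0 hd] := hf A GA e e0.
by exists d => // A' GA' h; rewrite -!fg //; exact: hd.
Qed.

Lemma cont_on_cst c : cont_on G (fun _ => c).
Proof. by move=> A _ e e0; exists 1 => // A' _ _; rewrite subrr normr0. Qed.

Lemma cont_on_scale a f : cont_on G f -> cont_on G (fun A => a * f A).
Proof.
move=> hf A GA e e0.
have a1 : 0 < `|a| + 1 by rewrite ltr_pwDr.
have [d d0 hd] := hf A GA (e / (`|a| + 1)) (divr_gt0 e0 a1).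
exists d => // A' GA' /(hd A' GA') fA'; rewrite -mulrBr normrM.
apply: le_lt_trans (_ : (`|a| + 1) * `|f A' - f A| < e).
  by rewrite ler_wpM2r // lerDl.
by rewrite mulrC -ltr_pdivlMr.
Qed.

Lemma cont_on_add f g : cont_on G f -> cont_on G g -> cont_on G (fun A => f A + g A).
Proof.
move=> hf hg A GA e e0.
have e2 : 0 < e / 2 by rewrite divr_gt0.
have [d1 d10 hd1] := hf A GA _ e2.
have [d2 d20 hd2] := hg A GA _ e2.
(* [d1 d2 / (d1 + d2)] stands for [min d1 d2], which the partial order of [C] lacks. *)
exists (d1 * d2 / (d1 + d2)); first by rewrite divr_gt0 ?mulr_gt0 ?addr_gt0.
have le1 : d1 * d2 / (d1 + d2) <= d1.
  by rewrite ler_pdivrMr ?addr_gt0 // ler_pM2l // lerDr ltW.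
have le2 : d1 * d2 / (d1 + d2) <= d2.
  by rewrite ler_pdivrMr ?addr_gt0 // mulrC ler_pM2l // lerDl ltW.
move=> A' GA' hA'.
have h1 := hd1 A' GA' (fun i j => lt_le_trans (hA' i j) le1).
have h2 := hd2 A' GA' (fun i j => lt_le_trans (hA' i j) le2).
rewrite opprD addrACA [e]splitr.
exact: le_lt_trans (ler_normD _ _) (ltrD h1 h2).
Qed.

Lemma cont_on_sum (J : Type) (s : seq J) (c : J -> C) (F : J -> 'M[C]_n -> C) :
  (forall j, cont_on G (F j)) -> cont_on G (fun A => \sum_(j <- s) c j * F j A).
Proof.
move=> hF; elim: s => [|j s IH].
  by apply: cont_on_ext (cont_on_cst 0) => A _; rewrite big_nil.
apply: cont_on_ext (cont_on_add (cont_on_scale (c j) (hF j)) IH) => A _.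
by rewrite big_cons.
Qed.

Variable I : ('M[C]_n -> C) -> C.
Hypothesis hI : haar_integral G I.

Lemma haar_integral_ext f g : (forall A, G A -> f A = g A) -> I f = I g.
Proof. by case: hI => _ hloc _ _ _; exact: hloc. Qed.

Lemma haar_integral_cst c : I (fun _ => c) = c.
Proof.
case: hI => hlin _ _ h1 _.
by have := hlin _ _ (cont_on_cst 1) (cont_on_cst 1) c 0; rewrite h1 !mulr1 ?mul0r !addr0.
Qed.

Lemma haar_integral_sum (J : Type) (s : seq J) (c : J -> C) (F : J -> 'M[C]_n -> C) :
  (forall j, cont_on G (F j)) ->
  I (fun A => \sum_(j <- s) c j * F j A) = \sum_(j <- s) c j * I (F j).
Proof.
case: hI => hlin _ _ _ _ hF; elim: s => [|j s IH].
  rewrite big_nil -[RHS](haar_integral_cst 0).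
  by apply: haar_integral_ext => A _; rewrite big_nil.
rewrite big_cons -IH -[X in _ + X]mul1r -hlin; [|exact: hF | exact: cont_on_sum].
by apply: haar_integral_ext => A _; rewrite big_cons mul1r.
Qed.

End HaarIntegral.

Definition fixed_by (R : realType) n m (G : 'M[R[i]]_n -> Prop)
  (rho : 'M[R[i]]_n -> 'M[R[i]]_m) p (M : 'M[R[i]]_(m, p)) : Prop :=
  forall g, G g -> rho g *m M = M.

Section Averaging.
Variables (R : realType) (n m : nat) (rho : 'M[R[i]]_n -> 'M[R[i]]_m).
Local Notation C := R[i].
Hypothesis hrho : unitary_rep rho.
Variables (G : 'M[C]_n -> Prop) (I : ('M[C]_n -> C) -> C).
Hypotheses (G_unitary : forall A, G A -> unitary A) (hI : haar_integral G I).

Local Notation P := (avg_op rho I).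

Lemma rhoM_on A B : G A -> G B -> rho (A *m B) = rho A *m rho B.
Proof. by case: hrho => hM _ _ _ GA GB; apply: hM; exact: G_unitary. Qed.

Lemma cont_on_rho i j : cont_on G (fun A => rho A i j).
Proof. by case: hrho => _ _ _ hc; exact: cont_on_sub G_unitary (hc i j). Qed.

Lemma avg_op_mulmx p (M : 'M[C]_(m, p)) :
  P *m M = \matrix_(i, j) I (fun A => (rho A *m M) i j).
Proof.
apply/matrixP => i j; rewrite [RHS]mxE.
rewrite (haar_integral_ext hI (g := fun A => \sum_k M k j * rho A i k)); last first.
  by move=> A _; rewrite mxE; apply: eq_bigr => k _; rewrite mulrC.
rewrite (haar_integral_sum hI) => [|k]; last exact: cont_on_rho.
by rewrite mxE; apply: eq_bigr => k _; rewrite mxE mulrC.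
Qed.

Lemma mulmx_avg_op p (M : 'M[C]_(p, m)) :
  M *m P = \matrix_(i, j) I (fun A => (M *m rho A) i j).
Proof.
apply/matrixP => i j; rewrite [RHS]mxE.
rewrite (haar_integral_ext hI (g := fun A => \sum_k M i k * rho A k j)); last first.
  by move=> A _; rewrite mxE.
rewrite (haar_integral_sum hI) => [|k]; last exact: cont_on_rho.
by rewrite mxE; apply: eq_bigr => k _; rewrite mxE.
Qed.

Lemma avg_op_fixed p (M : 'M[C]_(m, p)) : fixed_by G rho M -> P *m M = M.
Proof.
move=> fixM; rewrite avg_op_mulmx; apply/matrixP => i j; rewrite mxE.
rewrite -[RHS](haar_integral_cst hI); apply: (haar_integral_ext hI) => A GA.
by rewrite fixM.
Qed.

Lemma adj_fixed_mulmx p (M : 'M[C]_(m, p)) g :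
  fixed_by G rho M -> G g -> adj M *m rho g = adj M.
Proof.
move=> fixM Gg; have [_ _ rho_unitary _] := hrho.
have Ug := unitary_adj_mul (rho_unitary g (G_unitary Gg)).
by rewrite -{1}(fixM g Gg) adjM -mulmxA Ug mulmx1.
Qed.

Lemma fixed_avg_op : fixed_by G rho P.
Proof.
move=> g Gg; rewrite mulmx_avg_op; apply/matrixP => i j; rewrite !mxE.
have [_ _ _ _ hinv] := hI.
rewrite -(hinv _ _ (cont_on_rho i j) Gg); apply: (haar_integral_ext hI) => A GA.
by rewrite rhoM_on.
Qed.

Lemma avg_op_orthoproj : orthoproj P.
Proof.
have adjPP : adj P *m P = adj P.
  rewrite mulmx_avg_op; apply/matrixP => i j; rewrite mxE.
  rewrite -[RHS](haar_integral_cst hI); apply: (haar_integral_ext hI) => A GA.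
  by rewrite adj_fixed_mulmx //; exact: fixed_avg_op.
have adjP : adj P = P by rewrite -[RHS]adjK -adjPP adjM adjK.
by split; rewrite // -{1}adjP adjPP.
Qed.

Lemma avg_op_comm (M : 'M[C]_m) :
  (forall A, G A -> M *m rho A = rho A *m M) -> M *m P = P *m M.
Proof.
move=> cM; rewrite mulmx_avg_op avg_op_mulmx; apply/matrixP => i j; rewrite !mxE.
by apply: (haar_integral_ext hI) => A GA; rewrite cM.
Qed.

End Averaging.

Section TwoSubgroups.
Variables (R : realType) (n m : nat) (rho : 'M[R[i]]_n -> 'M[R[i]]_m).
Local Notation C := R[i].
Hypothesis hrho : unitary_rep rho.
Variables (G H : 'M[C]_n -> Prop) (IG IH : ('M[C]_n -> C) -> C).
Hypotheses (G_unitary : forall A, G A -> unitary A) (H_unitary : forall A, H A -> unitary A)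
  (hIG : haar_integral G IG) (hIH : haar_integral H IH).

Lemma avg_op_mul_sub : (forall A, G A -> H A) ->
  avg_op rho IG *m avg_op rho IH = avg_op rho IH.
Proof.
move=> GH; apply: (avg_op_fixed hrho G_unitary hIG) => g /GH Hg.
exact: (fixed_avg_op hrho H_unitary hIH).
Qed.

Lemma avg_op_commute : (forall g h, G g -> H h -> g *m h = h *m g) ->
  avg_op rho IG *m avg_op rho IH = avg_op rho IH *m avg_op rho IG.
Proof.
have [rhoM _ _ _] := hrho.
move=> cGH; apply: (avg_op_comm hrho H_unitary hIH) => h Hh; symmetry.
apply: (avg_op_comm hrho G_unitary hIG) => g Gg.
have [Ug Uh] := (G_unitary Gg, H_unitary Hh).
by rewrite -!rhoM // (cGH g h).
Qed.

End TwoSubgroups.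

Section Coordinates.
Variables (R : realType) (n : nat).
Local Notation C := R[i].

Lemma UB_unitary B (A : 'M[C]_n) : UB B A -> unitary A.
Proof. by case. Qed.

Lemma UB_subset (B B' : {set 'I_n}) (A : 'M[C]_n) : B \subset B' -> UB B A -> UB B' A.
Proof.
move=> /subsetP sBB' [UA idA]; split=> // i j ij; apply: idA.
by apply: contraTT ij; rewrite negb_or !negbK => /andP [/sBB' -> /sBB' ->].
Qed.

Lemma UB_set1_diag i (A : 'M[C]_n) : UB [set i] A -> is_diag_mx A.
Proof.
case=> _ idA; apply/is_diag_mxP => a b /negbTE ab; rewrite idA -?val_eqE ?ab //.
by rewrite !in_set1 -negb_and; apply/negP => /andP [/eqP ai /eqP bi]; rewrite ai bi eqxx in ab.
Qed.

Lemma diag_mx_comm (A A' : 'M[C]_n) : is_diag_mx A -> is_diag_mx A' -> A *m A' = A' *m A.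
Proof. by move=> /diag_mxP [d ->] /diag_mxP [d' ->]; exact: diag_mxC. Qed.

Lemma unitary_diag_mx (d : 'rV[C]_n) :
  unitary (diag_mx d) <-> forall a, d 0 a * (d 0 a)^* = 1.
Proof.
rewrite /unitary /adj mul_diag_mx; split => [/matrixP Ud a | Ud].
  by have := Ud a a; rewrite !mxE eqxx !mulr1n.
apply/matrixP => a b; rewrite !mxE; case: eqVneq => [<-|ab]; first by rewrite !mulr1n.
by rewrite !mulr0n conjC0 mulr0.
Qed.

Lemma UB_set1_diag_mx i c : c * c^* = 1 ->
  UB [set i] (diag_mx (\row_a (if a == i then c else 1)) : 'M[C]_n).
Proof.
move=> cU; split.
  by apply/unitary_diag_mx => a; rewrite mxE; case: ifP; rewrite ?conjC1 ?mulr1.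
move=> a b ab; rewrite !mxE; case: (eqVneq a b) => [eab|]; last by rewrite !mulr0n.
by move: ab; rewrite -eab orbb in_set1 => /negbTE ->.
Qed.

Variables (m : nat) (rho : 'M[C]_n -> 'M[C]_m).
Hypothesis hrho : unitary_rep rho.

Lemma fixed_by_torus p (M : 'M[C]_(m, p)) :
  (forall i, fixed_by (@UB R n [set i]) rho M) -> fixed_by (@torus R n) rho M.
Proof.
move=> fixM t [Ud /diag_mxP [d td]]; rewrite td; rewrite td in Ud.
have d_unit := (unitary_diag_mx d).1 Ud.
have [rhoM rho1 _ _] := hrho.
pose D k := diag_mx (\row_a (if (a < k)%N then d 0 a else 1)) : 'M[C]_n.
suff fixD k : (k <= n)%N -> rho (D k) *m M = M.
  have -> : diag_mx d = D n by congr diag_mx; apply/rowP => a; rewrite mxE ltn_ord.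
  exact: fixD.
elim: k => [_|k IH lt_kn].
  rewrite /D (_ : \row_a _ = const_mx 1) ?diag_const_mx ?rho1 ?mul1mx //.
  by apply/rowP => a; rewrite !mxE.
pose k' := Ordinal lt_kn.
have Dk1 : D k.+1 = D k *m diag_mx (\row_a (if a == k' then d 0 k' else 1)).
  rewrite mulmx_diag; congr diag_mx; apply/rowP => a; rewrite !mxE ltnS leq_eqVlt.
  case: (eqVneq a k') => [->|ak]; first by rewrite /= eqxx ltnn mul1r.
  have /negbTE -> : (a != k :> nat) := ak.
  by rewrite mulr1.
have Sk := UB_set1_diag_mx k' (d_unit k').
have UDk : unitary (D k).
  by apply/unitary_diag_mx => a; rewrite mxE; case: ifP; rewrite ?d_unit ?conjC1 ?mulr1.
rewrite Dk1 rhoM //; last exact: UB_unitary Sk.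
by rewrite -mulmxA (fixM k' _ Sk) IH // ltnW.
Qed.

End Coordinates.

Section CoordinateAverages.
Variables (R : realType) (n m : nat) (rho : 'M[R[i]]_n -> 'M[R[i]]_m).
Variable I : {set 'I_n} -> ('M[R[i]]_n -> R[i]) -> R[i].
Hypotheses (hrho : unitary_rep rho) (hI : forall B, haar_integral (@UB R n B) (I B)).

Local Notation P B := (avg_op rho (I B)).

Lemma avg_op_UB_orthoproj B : orthoproj (P B).
Proof. exact: (avg_op_orthoproj hrho (@UB_unitary R n B) (hI B)). Qed.

Lemma avg_op_set1_comm i j : P [set i] *m P [set j] = P [set j] *m P [set i].
Proof.
apply: (avg_op_commute hrho (@UB_unitary R n _) (@UB_unitary R n _) (hI _) (hI _)).
by move=> g h /UB_set1_diag + /UB_set1_diag; exact: diag_mx_comm.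
Qed.

Lemma avg_op_set1_mul i (B : {set 'I_n}) : i \in B -> P [set i] *m P B = P B.
Proof.
move=> iB; apply: (avg_op_mul_sub hrho (@UB_unitary R n _) (@UB_unitary R n _) (hI _) (hI _)).
by move=> A; apply: UB_subset; rewrite sub1set.
Qed.

Lemma TorInv_avg_op_set1 u : (forall i, P [set i] *m u = u) -> TorInv rho u.
Proof.
move=> Pu; apply: (fixed_by_torus hrho) => i g Ug; rewrite -(Pu i) mulmxA.
by rewrite (fixed_avg_op hrho (@UB_unitary R n _) (hI _)).
Qed.

Lemma ip_laplacian (w : {set 'I_n} -> R) v :
  ip v (laplacian w rho I *m v) = \sum_B (w B)%:C * ip v ((1%:M - P B) *m v).
Proof.
rewrite /laplacian mulmx_suml ip_sumr; apply: eq_bigr => B _.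
by rewrite -scalemxAl ipZr.
Qed.

End CoordinateAverages.

Theorem lemma3p10 (R : realType) (n m : nat) (w : {set 'I_n} -> R)
  (hw : forall B, 0 <= w B)
  (rho : 'M[R[i]]_n -> 'M[R[i]]_m) (hrho : unitary_rep rho)
  (I : {set 'I_n} -> ('M[R[i]]_n -> R[i]) -> R[i])
  (hI : forall B, haar_integral (@UB R n B) (I B))
  (lam : R[i]) (v : 'cV[R[i]]_m) :
  TorInvPerp rho v -> v != 0 -> laplacian w rho I *m v = lam *: v ->
  (phi w)%:C <= lam.
Proof.
case: m rho hrho v => [|k] rho hrho v v_perp v_nz Lv.
  by rewrite [v]flatmx0 eqxx in v_nz.
have v_perp' u : (forall i, avg_op rho (I [set i]) *m u = u) -> ip u v = 0.
  by move=> Pu; rewrite /ip (v_perp u (TorInv_avg_op_set1 hrho hI Pu)) mxE.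
have phi_le i : (phi w)%:C <= \sum_(B : {set 'I_n} | i \in B) (w B)%:C.
  by rewrite -rmorph_sum lecR; exact: bigmin_le.
have w_ge0 B : 0 <= (w B)%:C by rewrite ler0c.
have := spectral_bound (fun i => avg_op_UB_orthoproj hrho hI _) (avg_op_set1_comm hrho hI)
  (avg_op_UB_orthoproj hrho hI) (avg_op_set1_mul hrho hI) w_ge0 v_perp' phi_le.
by rewrite -ip_laplacian Lv ipZr ler_pM2r // ip_gt0.
Qed.
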